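(* Consider the two-layer multi-item order fulfillment problem described in the context, with $K\ge 1$ FDCs, fixed costs $f_0\ge 0$ and $f_1,\dots,f_K>0$, and time-invariant variable costs $c_{k,t}^i\equiv c_k^i$. Let \textsc{Cost-Comparison V-Priority} be the Gated Priority-based Greedy policy that uses, for each item $i$, the ranking $k\prec_i j\iff c_k^i<c_j^i$ or ($c_k^i=c_j^i$ and $k<j$) on $\{0,\dots,K\}$, and the gating condition \[G=\mathbb{I}\left(\sum_{k=0}^K\Big[f_k\,\mathbb{I}\Big(\sum_{i=1}^n\hat m_{k,t}^i>0\Big)+\sum_{i=1}^n c_k^i\hat m_{k,t}^i\Big]>f_0+\sum_{i=1}^n c_0^iS_t^i\right).\] Then \[\mathfrak R_{\mathrm{inv}}(\textsc{Cost-Comparison V-Priority})\le\max\left\{\frac{f_0+\sum_{k\in[K]}f_k}{\min_{k\in[K]}f_k},\ 2\right\}.\]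
   Context: Problem. $n$ items, $K$ FDCs indexed $k\in[K]$, an RDC indexed $k=0$ with unlimited inventory. FDC $k$ initially holds $I_{k,0}^i\ge 0$ units of item $i$, never replenished. In periods $t=1,\dots,T$ an order $\boldsymbol S_t=(S_t^i)_i$ of nonnegative integers arrives; the policy must immediately and irrevocably choose $m_{k,t}^i\ge 0$ with $\sum_{k=0}^K m_{k,t}^i=S_t^i$ and $m_{k,t}^i\le I_{k,t-1}^i$ for $k\in[K]$, where $I_{k,t}^i=I_{k,0}^i-\sum_{\tau\le t}m_{k,\tau}^i$. Period cost $\sum_{k=0}^K[f_k\mathbb{I}(\sum_i m_{k,t}^i>0)+\sum_i c_{k,t}^im_{k,t}^i]$; total cost is the sum. An online policy (possibly randomized) decides in period $t$ using only fixed costs, initial inventories and orders/variable costs up to $t$. $\mathrm{ALG}(I)$ is the (expected) total cost on instance $I$, $\mathrm{OPT}(I)$ the offline optimal total cost. The time-invariant competitive ratio $\mathfrak R_{\mathrm{inv}}(\mathrm{ALG})$ is the supremum of $\mathrm{ALG}(I)/\mathrm{OPT}(I)$ over all $n,T$, initial inventories, nonnegative time-invariant variable costs $c_{k,t}^i=c_k^i$ (for all $t$), and order sequences. Gated Priority-based Greedy policy: with rankings $\prec_i$ on $\{0,\dots,K\}$ and gating condition $G$, in each period $t$ compute $\hat m_{k,t}^i=\min\{(S_t^i-\sum_{k'\in[K]:k'\prec_ik}I_{k',t-1}^i)^+,\ I_{k,t-1}^i\}\cdot\mathbb{I}(k\prec_i0)$ for $k\in[K]$ and $\hat m_{0,t}^i=S_t^i-\sum_{k\in[K]}\hat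 m_{k,t}^i$; if $G=1$, send the whole order to the RDC ($m_{0,t}^i=S_t^i$, $m_{k,t}^i=0$ for $k\in[K]$), otherwise set $m_{k,t}^i=\hat m_{k,t}^i$; then update inventories. *)

From HB Require Import structures.
From mathcomp Require Import all_boot all_order all_algebra.
Set Implicit Arguments. Unset Strict Implicit. Unset Printing Implicit Defensive.
Import Order.TTheory GRing.Theory Num.Theory.
Local Open Scope ring_scope.

(* Locations are 'I_K.+1 : index 0 (= ord0) is the RDC, indices 1..K are FDCs.  Periods t = 1..T of the paper are indexed 0..T-1 here. *)

Section Fulfillment.
Variables (R : realFieldType) (n K : nat).

Definition period_cost (f : 'I_K.+1 -> R) (c : 'I_K.+1 -> 'I_n -> R)
    (m : 'I_K.+1 -> 'I_n -> nat) : R :=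
  \sum_(k < K.+1)
     (f k * (0 < \sum_(i < n) m k i)%N%:R + \sum_(i < n) c k i * (m k i)%:R).

Definition prec (c : 'I_K.+1 -> 'I_n -> R) (i : 'I_n) (k j : 'I_K.+1) : bool :=
  (c k i < c j i) || ((c k i == c j i) && (k < j)%N).

Definition hat_fdc (c : 'I_K.+1 -> 'I_n -> R) (inv : 'I_K.+1 -> 'I_n -> nat)
    (s : 'I_n -> nat) (k : 'I_K.+1) (i : 'I_n) : nat :=
  if prec c i k ord0 then
    minn (s i - \sum_(k' < K.+1 | (k' != ord0) && prec c i k' k) inv k' i)%N
         (inv k i)
  else 0%N.

Definition hat_m (c : 'I_K.+1 -> 'I_n -> R) (inv : 'I_K.+1 -> 'I_n -> nat)
    (s : 'I_n -> nat) (k : 'I_K.+1) (i : 'I_n) : nat :=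
  if k == ord0 then (s i - \sum_(k' < K.+1 | k' != ord0) hat_fdc c inv s k' i)%N
  else hat_fdc c inv s k i.

Definition gate (f : 'I_K.+1 -> R) (c : 'I_K.+1 -> 'I_n -> R)
    (inv : 'I_K.+1 -> 'I_n -> nat) (s : 'I_n -> nat) : bool :=
  period_cost f c (hat_m c inv s) > f ord0 + \sum_(i < n) c ord0 i * (s i)%:R.

Definition ccvp_decision (f : 'I_K.+1 -> R) (c : 'I_K.+1 -> 'I_n -> R)
    (inv : 'I_K.+1 -> 'I_n -> nat) (s : 'I_n -> nat) : 'I_K.+1 -> 'I_n -> nat :=
  if gate f c inv s then (fun k i => if k == ord0 then s i else 0%N)
  else hat_m c inv s.

(* inventory of the policy at the start of period t (index 0 entries unused) *)
Fixpoint ccvp_inv (f : 'I_K.+1 -> R) (c : 'I_K.+1 -> 'I_n -> R)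
    (I0 : 'I_K.+1 -> 'I_n -> nat) (S : nat -> 'I_n -> nat) (t : nat)
    : 'I_K.+1 -> 'I_n -> nat :=
  match t with
  | 0 => I0
  | t'.+1 => fun k i =>
      (ccvp_inv f c I0 S t' k i
       - ccvp_decision f c (ccvp_inv f c I0 S t') (S t') k i)%N
  end.

Definition ccvp_cost (f : 'I_K.+1 -> R) (c : 'I_K.+1 -> 'I_n -> R)
    (I0 : 'I_K.+1 -> 'I_n -> nat) (S : nat -> 'I_n -> nat) (T : nat) : R :=
  \sum_(t < T) period_cost f c (ccvp_decision f c (ccvp_inv f c I0 S t) (S t)).

Definition feasible (I0 : 'I_K.+1 -> 'I_n -> nat) (S : nat -> 'I_n -> nat)
    (T : nat) (m : nat -> 'I_K.+1 -> 'I_n -> nat) : Prop :=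
  forall t, (t < T)%N -> forall i : 'I_n,
    (\sum_(k < K.+1) m t k i)%N = S t i /\
    forall k : 'I_K.+1, k != ord0 ->
      (m t k i <= I0 k i - \sum_(tau < t) m tau k i)%N.

Definition plan_cost (f : 'I_K.+1 -> R) (c : 'I_K.+1 -> 'I_n -> R) (T : nat)
    (m : nat -> 'I_K.+1 -> 'I_n -> nat) : R :=
  \sum_(t < T) period_cost f c (m t).

Definition ratio_bound (f : 'I_K.+1 -> R) : R :=
  Num.max ((f ord0 + \sum_(k < K.+1 | k != ord0) f k)
            / \big[Num.min/f ord_max]_(k < K.+1 | k != ord0) f k) 2.

End Fulfillment.

From HB Require Import structures.
From mathcomp Require Import all_boot all_order all_algebra.
From mathcomp Require Import zify lra.
Set Implicit Arguments. Unset Strict Implicit. Unset Printing Implicit Defensive.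
Import Order.TTheory GRing.Theory Num.Theory.
Local Open Scope ring_scope.

(* Per period the policy pays at most the greedy tentative cost, and at most the
   RDC-only cost. If the offline plan opens an FDC k in that period, its fixed
   cost f_k >= min f pays, up to the ratio, for every fixed cost; otherwise the
   plan is RDC-only and the ratio >= 2 leaves room to spare. Either way the
   period costs at most ratio * OPT_t - V(m_t) + V(hat m_t), V the variable
   cost, so it remains to show that the greedy's total variable cost is at most
   the plan's. By a layer-cake decomposition of the unit costs it suffices to
   compare, for each item i and level l, the units shipped from locations
   costing more than l. For l < c_0^i the FDCs costing at most l form a prefix
   of the priority order, which the greedy drains as fast as the orders allow,
   so over the horizon it ships no more units from the expensive locations
   than any feasible plan. *)

Lemma ler_wsum_tails (R : realDomainType) (I : finType) (w x y : I -> R) :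
  (forall k, 0 <= w k) ->
  (forall l, 0 <= l -> \sum_(k | l < w k) x k <= \sum_(k | l < w k) y k) ->
  \sum_k w k * x k <= \sum_k w k * y k.
Proof.
have [N] := ubnP #|[set k | 0 < w k]|; elim: N w => // N IH w hN hw htail.
have w0 k : ~~ (0 < w k) -> w k = 0.
  by move=> hk; apply/eqP; rewrite eq_le hw andbT leNgt.
have [k1 hk1|none] := pickP (fun k => 0 < w k); last first.
  by rewrite !big1 // => k _; rewrite w0 ?none ?mul0r.
have [k0 hk0 k0min] := @arg_minP _ _ _ k1 (fun k => 0 < w k) w hk1.
pose w' k := if 0 < w k then w k - w k0 else 0.
(* peel off the lowest positive layer [w k0] of the weights *)
have peel z : \sum_k w k * z k = w k0 * \sum_(k | 0 < w k) z k + \sum_k w' k * z k.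
  rewrite (big_mkcond (fun k => 0 < w k)) mulr_sumr -big_split; apply: eq_bigr => k _ /=.
  rewrite /w'; case: ifP => [_|/negbT/w0 ->]; last by rewrite !mulr0 !mul0r addr0.
  by rewrite mulrBl addrC subrK.
rewrite !peel; apply: lerD; first exact: ler_wpM2l (ltW hk0) _ _ (htail _ (lexx 0)).
apply: IH => [|k|l l0].
- rewrite -ltnS; apply: leq_trans hN; rewrite ltnS (cardsD1 k0 [set k | 0 < w k]) inE hk0 ltnS.
  apply/subset_leq_card/subsetP => k; rewrite !inE /w'.
  case: ifP => [_|_]; last by rewrite ltxx.
  by rewrite subr_gt0 andbT; apply: contraTneq => ->; rewrite ltxx.
- by rewrite /w'; case: ifP => // h; rewrite subr_ge0 k0min.
have tail k : (l < w' k) = (l + w k0 < w k).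
  rewrite /w'; case: ifPn => [_|h]; first by rewrite ltrBrDr.
  apply/idP/idP => [/(le_lt_trans l0)|]; first by rewrite ltxx.
  by move=> /(le_lt_trans (addr_ge0 l0 (ltW hk0))); rewrite (negbTE h).
by rewrite !(eq_bigl _ _ tail); apply: htail (addr_ge0 l0 (ltW hk0)).
Qed.

(* [a t] is a stock that serving [minn (s t) (a t)] at time t depletes by at
   most that much; any schedule [u] drawn from the initial stock [a 0] leaves
   at least as much demand unserved. *)
Lemma greedy_shortfall_le (T : nat) (s u a : nat -> nat) :
  (forall t, a t <= a t.+1 + minn (s t) (a t))%N ->
  (forall t, t < T -> u t <= s t)%N -> (\sum_(t < T) u t <= a 0)%N ->
  (\sum_(t < T) (s t - minn (s t) (a t)) <= \sum_(t < T) (s t - u t))%N.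
Proof.
move=> ha hu hU.
have served T' : (minn (a 0) (\sum_(t < T') s t) <= \sum_(t < T') minn (s t) (a t))%N
    /\ (a 0 <= a T' + \sum_(t < T') minn (s t) (a t))%N.
  elim: T' => [|T' [IH1 IH2]]; first by rewrite !big_ord0 minn0 addn0.
  rewrite !big_ord_recr /=; have := ha T'.
  set X := (\sum_(t < T') s t)%N; set M := (\sum_(t < T') minn (s t) (a t))%N; lia.
have split_s (v : nat -> nat) : (forall t, t < T -> v t <= s t)%N ->
    (\sum_(t < T) (s t - v t) + \sum_(t < T) v t = \sum_(t < T) s t)%N.
  by move=> hv; rewrite -big_split; apply: eq_bigr => t _ /=; rewrite subnK ?hv.
have := split_s _ (fun t _ => geq_minl (s t) (a t)).
have := split_s _ hu; have [] := served T; lia.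
Qed.

Section Priority.
Variables (R : realFieldType) (n K : nat) (c : 'I_K.+1 -> 'I_n -> R) (i : 'I_n).

Local Notation prec := (prec c i).

Lemma prec_irr k : prec k k = false.
Proof. by rewrite /prec ltxx ltnn andbF. Qed.

Lemma prec_trans a b d : prec a b -> prec b d -> prec a d.
Proof.
rewrite /prec => /orP[h1|/andP[/eqP e1 h1]] /orP[h2|/andP[/eqP e2 h2]].
- by rewrite (lt_trans h1 h2).
- by rewrite -e2 h1.
- by rewrite e1 h2.
- by rewrite e1 e2 eqxx (ltn_trans h1 h2) orbT.
Qed.

Lemma prec_total a b : a != b -> prec a b || prec b a.
Proof.
rewrite /prec; case: (ltgtP (c a i) (c b i)) => //= _.
by rewrite -val_eqE neq_ltn.
Qed.

Lemma prec_max (P : {set 'I_K.+1}) k0 : k0 \in P ->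
  exists2 k, k \in P & forall j, j \in P -> j != k -> prec j k.
Proof.
pose rank k := #|[set j | prec j k]|.
have rank_lt a b : prec a b -> (rank a < rank b)%N.
  move=> hab; apply/proper_card/properP; split; last first.
    by exists a; rewrite !inE ?hab ?prec_irr.
  by apply/subsetP => j; rewrite !inE => /prec_trans; apply.
move=> /(arg_maxnP rank) [k kP kmax]; exists k => // j jP jk.
case/orP: (prec_total jk) => // /rank_lt.
by rewrite ltnNge (kmax j jP : (rank j <= rank k)%N).
Qed.

Lemma sum_hat_fdc_prefix (inv : 'I_K.+1 -> 'I_n -> nat) (s : 'I_n -> nat)
    (P : {set 'I_K.+1}) :
  (forall k, k \in P -> (k != ord0) && prec k ord0) ->
  (forall k j, k \in P -> j != ord0 -> prec j k -> j \in P) ->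
  (\sum_(k in P) hat_fdc c inv s k i = minn (s i) (\sum_(k in P) inv k i))%N.
Proof.
have [N] := ubnP #|P|; elim: N P => // N IH P hN hP hclosed.
have [->|[k0 /prec_max [k kP kmax]]] := set_0Vmem P.
  by rewrite !big_set0 minn0.
have below_k j : ((j != ord0) && prec j k) = (j \in P :\ k).
  rewrite !inE; apply/andP/andP => [[j0 jk]|[jk jP]].
    by rewrite (hclosed k j) //; split=> //; apply: contraTneq jk => ->; rewrite prec_irr.
  by case/andP: (hP j jP) => j0 _; split; last exact: kmax.
rewrite (big_setD1 k) //= [X in minn _ X](big_setD1 k) //= IH.
- rewrite /hat_fdc; case/andP: (hP k kP) => _ ->.
  rewrite (eq_bigl _ _ below_k); set a := (\sum_(j in P :\ k) inv j i)%N; lia.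
- by move: hN; rewrite (cardsD1 k P) kP.
- by move=> j; rewrite inE => /andP[_ /hP].
- move=> j j'; rewrite !inE => /andP[jk jP] j'0 j'j; rewrite (hclosed j j') // andbT.
  apply: contraTneq j'j => ->; apply/negP => kj.
  by have := prec_trans (kmax j jP jk) kj; rewrite prec_irr.
Qed.

Lemma sum_hat_fdc_le (inv : 'I_K.+1 -> 'I_n -> nat) (s : 'I_n -> nat) :
  (\sum_(k < K.+1 | k != ord0) hat_fdc c inv s k i <= s i)%N.
Proof.
rewrite (bigID (prec^~ ord0)) /= [X in (_ + X)%N]big1 => [|k /andP[_ /negbTE k0]]; last first.
  by rewrite /hat_fdc k0.
pose P := [set k | (k != ord0) && prec k ord0].
rewrite addn0 (eq_bigl (fun k => k \in P)) => [|k]; last by rewrite inE.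
rewrite sum_hat_fdc_prefix ?geq_minl // => [k|k j]; first by rewrite inE.
by rewrite !inE => /andP[_ k0] -> /prec_trans /(_ k0).
Qed.

End Priority.

Section Fulfillment.
Variables (R : realFieldType) (n K : nat).
Variables (f : 'I_K.+1 -> R) (c : 'I_K.+1 -> 'I_n -> R).

Definition fixed_cost (d : 'I_K.+1 -> 'I_n -> nat) : R :=
  \sum_(k < K.+1) f k * (0 < \sum_(i < n) d k i)%N%:R.

Definition var_cost (d : 'I_K.+1 -> 'I_n -> nat) : R :=
  \sum_(k < K.+1) \sum_(i < n) c k i * (d k i)%:R.

Definition rdc_only (s : 'I_n -> nat) (k : 'I_K.+1) (i : 'I_n) : nat :=
  if k == ord0 then s i else 0%N.

Lemma period_costE d : period_cost f c d = fixed_cost d + var_cost d.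
Proof. by rewrite /period_cost -big_split. Qed.

Lemma eq_period_cost d d' : d =2 d' -> period_cost f c d = period_cost f c d'.
Proof.
move=> dd'; apply: eq_bigr => k _.
by congr (_ * (0 < _)%:R + _); apply: eq_bigr => i _; rewrite dd'.
Qed.

Lemma period_cost_rdc_only s :
  period_cost f c (rdc_only s) =
  f ord0 * (0 < \sum_(i < n) s i)%N%:R + \sum_(i < n) c ord0 i * (s i)%:R.
Proof.
rewrite /period_cost (bigD1 ord0) //= [X in _ + X]big1 ?addr0 => [|k /negbTE k0].
  by rewrite /rdc_only eqxx.
by rewrite /rdc_only k0 big1 // mulr0 add0r big1 // => i _; rewrite mulr0.
Qed.

Lemma sum_var_cost (g : nat -> 'I_K.+1 -> 'I_n -> nat) T :
  \sum_(t < T) var_cost (g t)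
  = \sum_(i < n) \sum_(k < K.+1) c k i * (\sum_(t < T) g t k i)%:R.
Proof.
rewrite exchange_big [RHS]exchange_big; apply: eq_bigr => k _ /=.
rewrite exchange_big; apply: eq_bigr => i _.
by rewrite natr_sum mulr_sumr.
Qed.

Hypothesis f_ge0 : forall k, 0 <= f k.
Hypothesis c_ge0 : forall k i, 0 <= c k i.

Lemma var_cost_ge0 d : 0 <= var_cost d.
Proof. by apply: sumr_ge0 => k _; apply: sumr_ge0 => i _; rewrite mulr_ge0. Qed.

Lemma fixed_cost_ge0 d : 0 <= fixed_cost d.
Proof. by apply: sumr_ge0 => k _; rewrite mulr_ge0. Qed.

Lemma fixed_cost_le d : fixed_cost d <= \sum_k f k.
Proof. by apply: ler_sum => k _; case: (0 < _)%N; rewrite ?mulr1 ?mulr0. Qed.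

Lemma fixed_cost_ge d k : (0 < \sum_(i < n) d k i)%N -> f k <= fixed_cost d.
Proof.
move=> dk; rewrite /fixed_cost (bigD1 k) //= dk mulr1 lerDl.
by apply: sumr_ge0 => j _; rewrite mulr_ge0.
Qed.

Lemma decision_cost_le_hat inv s :
  period_cost f c (ccvp_decision f c inv s) <= period_cost f c (hat_m c inv s).
Proof.
rewrite /ccvp_decision; case: ifP => // /ltW; apply: le_trans.
by rewrite -/(rdc_only s) period_cost_rdc_only lerD2r; case: (0 < _)%N; rewrite ?mulr1 ?mulr0.
Qed.

Lemma hat_m_empty_order inv s : (forall i, s i = 0%N) -> hat_m c inv s =2 rdc_only s.
Proof.
move=> s0 k i; rewrite /hat_m /hat_fdc /rdc_only s0; case: ifP => _; first by rewrite sub0n.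
by case: ifP => _ //; rewrite sub0n min0n.
Qed.

(* For an empty order the gate compares with f_0 although shipping nothing is
   free; then hat_m is empty as well. *)
Lemma decision_cost_le_rdc_only inv s :
  period_cost f c (ccvp_decision f c inv s) <= period_cost f c (rdc_only s).
Proof.
rewrite /ccvp_decision /gate; case: ifPn => [//|]; rewrite -leNgt => hat_le.
have [/eqP|s_pos] := posnP (\sum_(i < n) s i); last first.
  by rewrite period_cost_rdc_only s_pos mulr1.
rewrite sum_nat_eq0 => /forallP s0.
by rewrite (eq_period_cost (hat_m_empty_order inv (fun i => eqP (s0 i)))).
Qed.

Lemma rdc_only_of_fdc_unused mt s :
  (forall i, \sum_(k < K.+1) mt k i = s i)%N ->
  (forall k, k != ord0 -> \sum_(i < n) mt k i = 0%N) -> mt =2 rdc_only s.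
Proof.
move=> hs unused k i.
have fdc0 j : j != ord0 -> mt j i = 0%N.
  by move=> /unused/eqP; rewrite sum_nat_eq0 => /forallP/(_ i)/eqP.
rewrite /rdc_only; case: eqP => [->|/eqP/fdc0 //].
by rewrite -hs (bigD1 ord0) //= big1 ?addn0 // => j /fdc0.
Qed.

Lemma decision_cost_le (B : R) inv s mt :
  2 <= B -> (forall k, k != ord0 -> \sum_j f j <= B * f k) ->
  (forall i, \sum_(k < K.+1) mt k i = s i)%N ->
  period_cost f c (ccvp_decision f c inv s)
    <= B * period_cost f c mt - var_cost mt + var_cost (hat_m c inv s).
Proof.
move=> B2 hB hs.
have vm0 := var_cost_ge0 mt; have vh0 := var_cost_ge0 (hat_m c inv s).
have fm0 := fixed_cost_ge0 mt.
have [k /andP[k0 mk]|no_fdc] :=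
  pickP (fun k => (k != ord0) && (0 < \sum_(i < n) mt k i)%N).
  have : \sum_j f j <= B * fixed_cost mt.
    by apply: le_trans (hB k k0) _; rewrite ler_wpM2l ?fixed_cost_ge //; lra.
  have := decision_cost_le_hat inv s; have := fixed_cost_le (hat_m c inv s).
  have : 0 <= (B - 1) * var_cost mt by apply: mulr_ge0; lra.
  by rewrite !period_costE mulrBl mul1r mulrDr; lra.
have unused k : k != ord0 -> \sum_(i < n) mt k i = 0%N.
  by move=> k0; move: (no_fdc k); rewrite /= k0 lt0n => /negbFE/eqP.
have := decision_cost_le_rdc_only inv s.
rewrite -(eq_period_cost (rdc_only_of_fdc_unused hs unused)) !period_costE.
have : 0 <= (B - 2) * (fixed_cost mt + var_cost mt) by apply: mulr_ge0; lra.
by rewrite mulrBl mulrDr; lra.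
Qed.

End Fulfillment.

Section Levels.
Variables (R : realFieldType) (n K : nat).
Variables (f : 'I_K.+1 -> R) (c : 'I_K.+1 -> 'I_n -> R) (i : 'I_n) (l : R).

Definition cheap_fdcs : {set 'I_K.+1} := [set k | (k != ord0) && (c k i <= l)].

Lemma hat_m_expensive_eq0 inv s k :
  c ord0 i <= l -> l < c k i -> hat_m c inv s k i = 0%N.
Proof.
move=> c0l lck; rewrite /hat_m; case: eqP => [k0|_].
  by move: lck; rewrite k0 ltNge c0l.
rewrite /hat_fdc /prec ltn0 andbF orbF; case: ifP => // ck0.
by move: (lt_trans lck ck0); rewrite ltNge c0l.
Qed.

Hypothesis l_lt_c0 : l < c ord0 i.

Lemma sum_hat_fdc_cheap inv s :
  (\sum_(k in cheap_fdcs) hat_fdc c inv s k i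
   = minn (s i) (\sum_(k in cheap_fdcs) inv k i))%N.
Proof.
apply: sum_hat_fdc_prefix => [k|k j]; rewrite !inE.
  by case/andP=> -> ckl; rewrite /prec (le_lt_trans ckl l_lt_c0).
case/andP=> _ ckl -> /= /orP[/ltW|/andP[/eqP-> _]] //.
by move/le_trans; apply.
Qed.

Lemma sum_expensive (d : 'I_K.+1 -> 'I_n -> nat) (s : 'I_n -> nat) :
  (\sum_(k < K.+1) d k i = s i)%N ->
  (\sum_(k | (l < c k i)%R) d k i = s i - \sum_(k in cheap_fdcs) d k i)%N.
Proof.
move=> <-; rewrite [X in (X - _)%N](bigID (fun k => l < c k i)) /=.
rewrite [X in (_ + X - _)%N](eq_bigl (fun k => k \in cheap_fdcs)) ?addnK // => k.
by rewrite inE -leNgt; case: eqP => [->|//]; rewrite leNgt l_lt_c0.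
Qed.

Lemma sum_hat_m_expensive inv s :
  (\sum_(k | (l < c k i)%R) hat_m c inv s k i
   = s i - minn (s i) (\sum_(k in cheap_fdcs) inv k i))%N.
Proof.
rewrite (bigD1 ord0) //= {1}/hat_m eqxx -sum_hat_fdc_cheap.
rewrite (eq_bigr (hat_fdc c inv s ^~ i)) => [|k /andP[_ /negbTE k0]]; last first.
  by rewrite /hat_m k0.
have := sum_hat_fdc_le c i inv s.
rewrite (bigID (fun k => c k i <= l)) /= (eq_bigl (fun k => k \in cheap_fdcs)) => [|k]; last first.
  by rewrite inE.
rewrite (eq_bigl (fun k => (l < c k i) && (k != ord0)) (hat_fdc c inv s ^~ i)) => [|k].
  set a := (\sum_(k in cheap_fdcs) _)%N; set b := (\sum_(k | _ && _) _)%N; lia.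
by rewrite -ltNge andbC.
Qed.

Lemma sum_cheap_inv_step inv s :
  (\sum_(k in cheap_fdcs) inv k i
   <= \sum_(k in cheap_fdcs) (inv k i - ccvp_decision f c inv s k i)
      + minn (s i) (\sum_(k in cheap_fdcs) inv k i))%N.
Proof.
rewrite -sum_hat_fdc_cheap -big_split /=; apply: leq_sum => k; rewrite inE => /andP[k0 _].
suff : (ccvp_decision f c inv s k i <= hat_fdc c inv s k i)%N by lia.
by rewrite /ccvp_decision; case: ifP => _; rewrite /= ?/hat_m (negbTE k0).
Qed.

End Levels.

Lemma feasible_sum_le_inv n K (I0 : 'I_K.+1 -> 'I_n -> nat) S T m k i :
  feasible I0 S T m -> k != ord0 -> (\sum_(t < T) m t k i <= I0 k i)%N.
Proof.
move=> hm k0; suff : forall t, (t <= T)%N -> (\sum_(u < t) m u k i <= I0 k i)%N by apply.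
elim=> [|t IH] tT; first by rewrite big_ord0.
rewrite big_ord_recr /=; have := (hm t tT i).2 k k0; have := IH (ltnW tT).
set a := (\sum_(u < t) m u k i)%N; lia.
Qed.

Section Dynamics.
Variables (R : realFieldType) (n K : nat).
Variables (f : 'I_K.+1 -> R) (c : 'I_K.+1 -> 'I_n -> R).
Variables (I0 : 'I_K.+1 -> 'I_n -> nat) (S : nat -> 'I_n -> nat) (T : nat).
Variable m : nat -> 'I_K.+1 -> 'I_n -> nat.
Hypothesis hm : feasible I0 S T m.

Local Notation hat t := (hat_m c (ccvp_inv f c I0 S t) (S t)).

Lemma sum_hat_expensive_le i l :
  (\sum_(k | (l < c k i)%R) \sum_(t < T) hat t k i
   <= \sum_(k | (l < c k i)%R) \sum_(t < T) m t k i)%N.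
Proof.
have [c0l|l_lt_c0] := leP (c ord0 i) l.
  by rewrite big1 // => k lck; rewrite big1 // => t _; exact: hat_m_expensive_eq0 c0l lck.
rewrite exchange_big [X in (_ <= X)%N]exchange_big /=.
rewrite (eq_bigr _ (fun t _ => sum_hat_m_expensive l_lt_c0 _ _)).
rewrite [X in (_ <= X)%N](eq_bigr _ (fun t _ => sum_expensive l_lt_c0 (hm (ltn_ord t) i).1)).
apply: (@greedy_shortfall_le T (S^~ i) (fun t => \sum_(k in cheap_fdcs c i l) m t k i)
    (fun t => \sum_(k in cheap_fdcs c i l) ccvp_inv f c I0 S t k i)) => [t|t tT|].
- exact: sum_cheap_inv_step.
- by rewrite -(hm tT i).1 [X in (_ <= X)%N](bigID (fun k => k \in cheap_fdcs c i l)) leq_addr.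
- rewrite exchange_big /=; apply: leq_sum => k; rewrite inE => /andP[k0 _].
  exact: feasible_sum_le_inv hm k0.
Qed.

Lemma sum_var_cost_hat_le : (forall k i, 0 <= c k i) ->
  \sum_(t < T) var_cost c (hat t) <= \sum_(t < T) var_cost c (m t).
Proof.
move=> c_ge0; rewrite (sum_var_cost _ (fun t => hat t)) sum_var_cost; apply: ler_sum => i _.
apply: ler_wsum_tails => // l _; rewrite -!natr_sum ler_nat.
exact: sum_hat_expensive_le.
Qed.

End Dynamics.

Lemma ratio_bound_ge2 (R : realFieldType) K (f : 'I_K.+1 -> R) : 2 <= ratio_bound f.
Proof. by rewrite /ratio_bound le_max lexx orbT. Qed.

Lemma sum_le_ratio_bound (R : realFieldType) K (f : 'I_K.+1 -> R) :
  (1 <= K)%N -> (forall k, k != ord0 -> 0 < f k) ->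
  forall k, k != ord0 -> \sum_j f j <= ratio_bound f * f k.
Proof.
move=> K1 f_gt0 k k0.
set fmin := \big[Num.min/f ord_max]_(j | j != ord0) f j.
have fmin_le : fmin <= f k by apply: bigmin_le_cond.
have fmin_gt0 : 0 < fmin.
  apply: (big_ind (fun x => 0 < x)) => [|x y|j /f_gt0 //]; last by rewrite lt_min => ->.
  by apply: f_gt0; rewrite -val_eqE /= -lt0n.
have ratio_le : (\sum_j f j) / fmin <= ratio_bound f.
  by rewrite (bigD1 ord0) //= /ratio_bound le_max lexx.
rewrite -(divfK (lt0r_neq0 fmin_gt0) (\sum_j f j)).
apply: (@le_trans _ _ (ratio_bound f * fmin)); first by rewrite ler_pM2r.
by rewrite ler_pM2l // (lt_le_trans _ (ratio_bound_ge2 f)).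
Qed.

Theorem theorem3 (R : realFieldType) (K : nat) (hK : (1 <= K)%N)
    (f : 'I_K.+1 -> R) (hf0 : 0 <= f ord0)
    (hf : forall k : 'I_K.+1, k != ord0 -> 0 < f k)
    (n T : nat) (c : 'I_K.+1 -> 'I_n -> R)
    (hc : forall k i, 0 <= c k i)
    (I0 : 'I_K.+1 -> 'I_n -> nat) (S : nat -> 'I_n -> nat)
    (m : nat -> 'I_K.+1 -> 'I_n -> nat) (hm : feasible I0 S T m) :
  ccvp_cost f c I0 S T <= ratio_bound f * plan_cost f c T m.
Proof.
have f_ge0 k : 0 <= f k by case: (eqVneq k ord0) => [->|/hf/ltW].
have per_period t : (t < T)%N ->
    period_cost f c (ccvp_decision f c (ccvp_inv f c I0 S t) (S t))
    <= ratio_bound f * period_cost f c (m t) - var_cost c (m t)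
       + var_cost c (hat_m c (ccvp_inv f c I0 S t) (S t)).
  move=> tT; apply: decision_cost_le => //; first exact: ratio_bound_ge2.
    exact: sum_le_ratio_bound.
  by move=> i; case: (hm t tT i).
rewrite /ccvp_cost /plan_cost.
apply: le_trans (ler_sum _ (fun (t : 'I_T) _ => per_period t (ltn_ord t))) _.
rewrite big_split /= sumrB -mulr_sumr.
have := sum_var_cost_hat_le f hm hc; lra.
Qed.
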